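(* Let $F$ be a field with $\mathrm{char}\,F\neq 2$, and let $A$ be a flexible quadratic $F$-algebra. If for every $3$-dimensional subalgebra $B$ of $A$ the restriction of the norm $n$ of $A$ to $B$ is non-degenerate, then $A$ is von-Neumann finite and reversible.
   Context: Algebras are vector spaces with bilinear, not necessarily associative, multiplication, and are unital. $A$ is flexible if $a(ba)=(ab)a$ for all $a,b$; quadratic if $1,a,a^2$ are linearly dependent for all $a$. For a quadratic algebra with $\mathrm{char}\,F\ne2$, set $\mathrm{Im}\,A=\{u\in A\setminus F1: u^2\in F1\}\cup\{0\}$; then $A=F1\oplus\mathrm{Im}\,A$, and writing $a=\alpha+u$ with $\alpha\in F,u\in\mathrm{Im}\,A$, the norm is $n(a)=\alpha^2-(u,u)$, where $(u,v)\in F$ is the $F1$-component of $uv$ for $u,v\in \mathrm{Im}\,A$ (equivalently $n(a)=a\bar a$ with $\bar a=\alpha-u$). For a quadratic form $q$ on a space $V$ with $\langle x,y\rangle=q(x+y)-q(x)-q(y)$ and $V^\perp=\{x:\langle x,V\rangle=0\}$, $q$ is non-degenerate if $V^\perp=0$ or ($\dim V^\perp=1$ and $q(V^\perp)\neq0$). von-Neumann finite: $ab=1\Rightarrow ba=1$; reversible: $ab=0\Rightarrow ba=0$. *)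

(* A (possibly infinite-dimensional, non-associative, unital)
   F-algebra is an lmodType F together with a bilinear multiplication [mul]
   and a two-sided unit [one]. *)
From mathcomp Require Import all_boot all_order all_algebra.
Set Implicit Arguments. Unset Strict Implicit. Unset Printing Implicit Defensive.
Import GRing.Theory.
Local Open Scope ring_scope.

Section Defs.
Variables (F : fieldType) (A : lmodType F) (mul : A -> A -> A) (one : A).

Definition unital_algebra : Prop :=
  [/\ forall (k : F) (x y z : A), mul (k *: x + y) z = k *: mul x z + mul y z,
      forall (k : F) (x y z : A), mul z (k *: x + y) = k *: mul z x + mul z y,
      forall x, mul one x = x
    & forall x, mul x one = x].

Definition flexible : Prop := forall a b, mul a (mul b a) = mul (mul a b) a.

Definition quadratic : Prop :=
  forall a : A, exists al be ga : F,
    [/\ (al, be, ga) != (0, 0, 0) & al *: one + be *: a + ga *: mul a a = 0].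

Definition ImA (u : A) : Prop :=
  u = 0 \/ ((~ exists al : F, u = al *: one) /\ exists c : F, mul u u = c *: one).

Definition is_norm (n : A -> F) : Prop :=
  forall (a u : A) (al c : F), ImA u -> a = al *: one + u -> mul u u = c *: one ->
    n a = al ^+ 2 - c.

Definition subspace (V : A -> Prop) : Prop :=
  [/\ V 0, forall x y, V x -> V y -> V (x + y) & forall (k : F) x, V x -> V (k *: x)].

Definition subalgebra (B : A -> Prop) : Prop :=
  [/\ subspace B, B one & forall x y, B x -> B y -> B (mul x y)].

Definition dim3 (V : A -> Prop) : Prop :=
  exists v1 v2 v3 : A, [/\ V v1, V v2, V v3,
    (forall k1 k2 k3 : F, k1 *: v1 + k2 *: v2 + k3 *: v3 = 0 ->
        [/\ k1 = 0, k2 = 0 & k3 = 0])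
  & forall x, V x -> exists k1 k2 k3 : F, x = k1 *: v1 + k2 *: v2 + k3 *: v3].

Definition polar (q : A -> F) (x y : A) : F := q (x + y) - q x - q y.

Definition radical (q : A -> F) (V : A -> Prop) (x : A) : Prop :=
  V x /\ forall y, V y -> polar q x y = 0.

Definition nondegenerate_on (q : A -> F) (V : A -> Prop) : Prop :=
  (forall x, radical q V x -> x = 0) \/
  ((exists v, [/\ radical q V v, v != 0 &
                 forall x, radical q V x -> exists k : F, x = k *: v])
   /\ exists x, radical q V x /\ q x != 0).

Definition von_neumann_finite : Prop := forall a b, mul a b = one -> mul b a = one.

Definition reversible : Prop := forall a b, mul a b = 0 -> mul b a = 0.

End Defs.

(* If ab = g1 then ba = g1; the cases g = 1 and g = 0 are the two claims.  When 1, a, b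
   are linearly dependent, a and b commute.  Otherwise write a = al + x and b = be + y
   with x^2, y^2 scalar.  Quadraticity of x + y and x - y makes xy + yx scalar, so
   B = F1 + Fx + Fy is a 3-dimensional subalgebra, in which xy = (g - al be) - be x - al y.
   Flexibility then makes be x + al y an isotropic vector of the radical of n on B; by
   non-degeneracy al = be = 0, and flexibility again gives yx = xy. *)

From mathcomp Require Import all_boot all_order all_algebra.
From mathcomp Require Import ring.
From Stdlib Require Import Classical.
Set Implicit Arguments. Unset Strict Implicit. Unset Printing Implicit Defensive.
Import GRing.Theory.
Local Open Scope ring_scope.

Section QuadraticAlgebra.
Variables (F : fieldType) (A : lmodType F).

Lemma nondegenerate_isotropic_radical (q : A -> F) (V : A -> Prop) (d : A) :
  (forall (k : F) x, V x -> q (k *: x) = k ^+ 2 * q x) ->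
  nondegenerate_on q V -> radical q V d -> q d = 0 -> d = 0.
Proof.
move=> qZ [rad0|[[v [[Vv _] _ rad_span]] [z [rad_z qz]]]] rad_d qd; first exact: rad0.
have [k dE] := rad_span d rad_d; have [k' zE] := rad_span z rad_z.
have qv : q v != 0.
  by apply: contraNneq qz => qv0; rewrite zE qZ // qv0 mulr0.
move: qd; rewrite {}dE qZ // => /eqP; rewrite mulf_eq0 (negbTE qv) orbF expf_eq0.
by move=> /eqP ->; rewrite scale0r.
Qed.

Lemma scale_solve (k : F) (w z : A) : k != 0 -> w + k *: z = 0 -> z = (- k^-1) *: w.
Proof.
move=> k0 e; have kz : k *: z = - w by apply/eqP; rewrite -addr_eq0 addrC e.
by rewrite -[z](scalerK k0) kz scalerN scaleNr.
Qed.

Variables (mul : A -> A -> A) (one : A).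
Hypothesis alg : unital_algebra mul one.
Hypothesis quad : quadratic mul one.
Hypothesis two : (2 : F) != 0.
Hypothesis flex : flexible mul.
Variable n : A -> F.
Hypothesis norm : is_norm mul one n.
Hypothesis nondeg :
  forall B : A -> Prop, subalgebra mul one B -> dim3 B -> nondegenerate_on n B.

Lemma amulDl x y z : mul (x + y) z = mul x z + mul y z.
Proof. by case: alg => mulDZl _ _ _; have := mulDZl 1 x y z; rewrite !scale1r. Qed.

Lemma amulDr x y z : mul z (x + y) = mul z x + mul z y.
Proof. by case: alg => _ mulDZr _ _; have := mulDZr 1 x y z; rewrite !scale1r. Qed.

Lemma amul0l z : mul 0 z = 0.
Proof. by apply: (addIr (mul 0 z)); rewrite -amulDl !add0r. Qed.

Lemma amul0r z : mul z 0 = 0.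
Proof. by apply: (addIr (mul z 0)); rewrite -amulDr !add0r. Qed.

Lemma amulZl k x z : mul (k *: x) z = k *: mul x z.
Proof. by case: alg => mulDZl _ _ _; have := mulDZl k x 0 z; rewrite !addr0 amul0l addr0. Qed.

Lemma amulZr k x z : mul z (k *: x) = k *: mul z x.
Proof. by case: alg => _ mulDZr _ _; have := mulDZr k x 0 z; rewrite !addr0 amul0r addr0. Qed.

Lemma amul1l x : mul one x = x.
Proof. by case: alg. Qed.

Lemma amul1r x : mul x one = x.
Proof. by case: alg. Qed.

Lemma mul_span1C a k l : mul a (k *: one + l *: a) = mul (k *: one + l *: a) a.
Proof. by rewrite amulDl amulDr !amulZl !amulZr amul1l amul1r. Qed.

Definition is_scalar (a : A) : Prop := exists k : F, a = k *: one.

Definition free3 (a b : A) : Prop := forall k0 k1 k2 : F,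
  k0 *: one + k1 *: a + k2 *: b = 0 -> [/\ k0 = 0, k1 = 0 & k2 = 0].

Lemma nonscalar_free a k l : ~ is_scalar a -> k *: one + l *: a = 0 -> k = 0 /\ l = 0.
Proof.
move=> an e; have [l0|l0] := eqVneq l 0; last first.
  by case: an; exists (- l^-1 * k); rewrite (scale_solve l0 e) scalerA mulNr.
split=> //; have [//|k0] := eqVneq k 0; case: an; exists 0.
move: e; rewrite l0 scale0r addr0 => /eqP; rewrite scaler_eq0 (negbTE k0) /= => /eqP one0.
by rewrite scale0r -[a]amul1r one0 amul0r.
Qed.

Lemma dependent_commute a b : ~ free3 a b -> mul a b = mul b a.
Proof.
move=> dep.
have [k0 [k1 [k2 [e nz]]]] : exists k0 k1 k2 : F,
    k0 *: one + k1 *: a + k2 *: b = 0 /\ ~ [/\ k0 = 0, k1 = 0 & k2 = 0].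
  apply: NNPP => none; apply: dep => k0 k1 k2 e; apply: NNPP => nz.
  by apply: none; exists k0, k1, k2.
have [k2_0|k2_0] := eqVneq k2 0; last first.
  by rewrite (scale_solve k2_0 e) scalerDr !scalerA mul_span1C.
have [[k ->]|an] := classic (is_scalar a); first by rewrite amulZl amulZr amul1l amul1r.
by move: e; rewrite k2_0 scale0r addr0 => /(nonscalar_free an) [k0_0 k1_0]; case: nz.
Qed.

Lemma sqr_shift a h :
  mul (a - h *: one) (a - h *: one) = mul a a - (h + h) *: a + (h * h) *: one.
Proof.
rewrite -scaleNr amulDl !amulDr !amulZl !amulZr !amul1l amul1r scalerA mulrNN.
by rewrite -!addrA; congr (_ + _); rewrite addrA -scalerDl -opprD scaleNr.
Qed.

Lemma sqr_span a : ~ is_scalar a -> exists s t : F, mul a a = s *: one + t *: a.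
Proof.
move=> an; have [al [be [ga [nz e]]]] := quad a.
have [ga0|ga0] := eqVneq ga 0.
  move: e; rewrite ga0 scale0r addr0 => /(nonscalar_free an) [al0 be0].
  by move: nz; rewrite al0 be0 ga0 eqxx.
exists (- ga^-1 * al), (- ga^-1 * be).
by rewrite (scale_solve ga0 e) scalerDr !scalerA.
Qed.

Lemma double_eq0 (t : F) : 2 * t = 0 -> t = 0.
Proof. by move/eqP; rewrite mulf_eq0 (negbTE two) => /eqP. Qed.

Lemma recenter a :
  ~ is_scalar a -> exists al c : F, mul (a - al *: one) (a - al *: one) = c *: one.
Proof.
move=> an; have [s [t sq]] := sqr_span an.
have tE : t / 2 + t / 2 = t by field.
by exists (t / 2), (s + t / 2 * (t / 2)); rewrite sqr_shift sq tE addrK scalerDl.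
Qed.

Section Span.
Variables x y : A.

Definition lcomb (k0 k1 k2 : F) : A := k0 *: one + k1 *: x + k2 *: y.

Definition span (z : A) : Prop := exists k0 k1 k2 : F, z = lcomb k0 k1 k2.

Lemma lcombD a0 a1 a2 b0 b1 b2 :
  lcomb a0 a1 a2 + lcomb b0 b1 b2 = lcomb (a0 + b0) (a1 + b1) (a2 + b2).
Proof. by rewrite /lcomb !scalerDl addrACA; congr (_ + _); rewrite addrACA. Qed.

Lemma lcombZ k a0 a1 a2 : k *: lcomb a0 a1 a2 = lcomb (k * a0) (k * a1) (k * a2).
Proof. by rewrite /lcomb !scalerDr !scalerA. Qed.

Lemma lcombN a0 a1 a2 : - lcomb a0 a1 a2 = lcomb (- a0) (- a1) (- a2).
Proof. by rewrite /lcomb !opprD !scaleNr. Qed.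

Lemma lcomb_one : one = lcomb 1 0 0.
Proof. by rewrite /lcomb scale1r !scale0r !addr0. Qed.

Lemma lcomb_x : x = lcomb 0 1 0.
Proof. by rewrite /lcomb !scale0r add0r scale1r addr0. Qed.

Lemma lcomb_y : y = lcomb 0 0 1.
Proof. by rewrite /lcomb !scale0r !add0r scale1r. Qed.

Lemma lcomb_zero : 0 = lcomb 0 0 0.
Proof. by rewrite /lcomb !scale0r !addr0. Qed.

Ltac lcombE := rewrite ?lcomb_one ?lcomb_x ?lcomb_y ?lcomb_zero ?(lcombD, lcombZ, lcombN).

Lemma mul_lcomb P0 P1 P2 Q0 Q1 Q2 R0 R1 R2 S0 S1 S2 :
    mul x x = lcomb P0 P1 P2 -> mul x y = lcomb Q0 Q1 Q2 ->
    mul y x = lcomb R0 R1 R2 -> mul y y = lcomb S0 S1 S2 ->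
  forall a0 a1 a2 b0 b1 b2, mul (lcomb a0 a1 a2) (lcomb b0 b1 b2) =
    lcomb (a0 * b0 + a1 * b1 * P0 + a1 * b2 * Q0 + a2 * b1 * R0 + a2 * b2 * S0)
          (a0 * b1 + a1 * b0 + a1 * b1 * P1 + a1 * b2 * Q1 + a2 * b1 * R1 + a2 * b2 * S1)
          (a0 * b2 + a2 * b0 + a1 * b1 * P2 + a1 * b2 * Q2 + a2 * b1 * R2 + a2 * b2 * S2).
Proof.
move=> xx xy yx yy a0 a1 a2 b0 b1 b2.
rewrite {1 2}/lcomb !(amulDl, amulDr, amulZl, amulZr) !amul1l !amul1r xx xy yx yy.
by lcombE; congr lcomb; ring.
Qed.

Lemma span_subalgebra :
  span (mul x x) -> span (mul x y) -> span (mul y x) -> span (mul y y) ->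
  subalgebra mul one span.
Proof.
move=> [P0 [P1 [P2 xx]]] [Q0 [Q1 [Q2 xy]]] [R0 [R1 [R2 yx]]] [S0 [S1 [S2 yy]]].
split; [split| |].
- by exists 0, 0, 0; exact: lcomb_zero.
- by move=> _ _ [a0 [a1 [a2 ->]]] [b0 [b1 [b2 ->]]]; rewrite lcombD; do 3 eexists.
- by move=> k _ [a0 [a1 [a2 ->]]]; rewrite lcombZ; do 3 eexists.
- by exists 1, 0, 0; exact: lcomb_one.
- move=> _ _ [a0 [a1 [a2 ->]]] [b0 [b1 [b2 ->]]].
  by rewrite (mul_lcomb xx xy yx yy); do 3 eexists.
Qed.

Section Free.
Hypothesis free : free3 x y.

Lemma lcomb_inj a0 a1 a2 b0 b1 b2 :
  lcomb a0 a1 a2 = lcomb b0 b1 b2 -> [/\ a0 = b0, a1 = b1 & a2 = b2].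
Proof.
move=> e; have : lcomb (a0 - b0) (a1 - b1) (a2 - b2) = 0 by rewrite -lcombD -lcombN e subrr.
by case/free => /subr0_eq -> /subr0_eq -> /subr0_eq ->.
Qed.

Lemma span_dim3 : dim3 span.
Proof.
exists one, x, y; split; [exists 1, 0, 0 | exists 0, 1, 0 | exists 0, 0, 1 | exact: free |].
- exact: lcomb_one.
- exact: lcomb_x.
- exact: lcomb_y.
- by move=> _ [z0 [z1 [z2 ->]]]; exists z0, z1, z2.
Qed.

Lemma lcomb_nonscalar c1 c2 : (c1 != 0) || (c2 != 0) -> ~ is_scalar (lcomb 0 c1 c2).
Proof.
move=> c12 [k]; rewrite lcomb_one lcombZ => /lcomb_inj [_ c1E c2E].
by move: c12; rewrite c1E c2E !mulr0 eqxx.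
Qed.

Lemma free3_nonscalar : ~ is_scalar x.
Proof. by rewrite lcomb_x; apply: lcomb_nonscalar; rewrite oner_eq0. Qed.

Lemma free3C : free3 y x.
Proof. by move=> k0 k1 k2; rewrite addrAC => /free [-> -> ->]. Qed.

Lemma free3_shift al be : free3 (x - al *: one) (y - be *: one).
Proof.
move=> k0 k1 k2 e.
have : lcomb (k0 - k1 * al - k2 * be) k1 k2 = 0 by rewrite -e; lcombE; congr lcomb; ring.
by case/free => /eqP; rewrite -!addrA -!opprD subr_eq0 => /eqP -> -> ->; rewrite !mul0r addr0.
Qed.

Lemma anticomm_scalar cu cv : mul x x = cu *: one -> mul y y = cv *: one ->
  exists s, mul x y + mul y x = s *: one.
Proof.
move=> xx yy; set p := mul x y + mul y x.
have sqr_comb c : mul (lcomb 0 1 c) (lcomb 0 1 c) = (cu + c * c * cv) *: one + c *: p.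
  rewrite /lcomb scale0r add0r scale1r amulDl !amulDr !amulZl !amulZr xx yy.
  by rewrite !scalerA scalerDr scalerDl [c *: mul y x + _]addrC addrACA.
have scaled_p c : exists s t, c *: p = lcomb s t (t * c).
  have nsc : ~ is_scalar (lcomb 0 1 c) by apply: lcomb_nonscalar; rewrite oner_eq0.
  have [s [t e]] := sqr_span nsc.
  exists (s - cu - c * c * cv), t; apply: (addrI ((cu + c * c * cv) *: one)).
  by rewrite -sqr_comb e; lcombE; congr lcomb; ring.
have [s1 [t1 p1]] := scaled_p 1; have [s2 [t2 p2]] := scaled_p (-1).
rewrite scale1r in p1; rewrite scaleN1r p1 lcombN in p2.
case/lcomb_inj: p2 => _ t12 t12'.
have t1_0 : t1 = 0.
  have : 2 * t1 = t2 * -1 - - (t1 * 1) by rewrite -t12; ring.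
  by rewrite -t12' subrr => /double_eq0.
by exists s1; rewrite p1 t1_0 lcomb_one lcombZ; congr lcomb; ring.
Qed.

Lemma scalar_lcomb k : k *: one = lcomb k 0 0.
Proof. by rewrite lcomb_one lcombZ mulr1 mulr0. Qed.

Section ScalarProduct.
Variables cu cv s al be ga : F.
Hypotheses (xx : mul x x = cu *: one) (yy : mul y y = cv *: one).
Hypothesis anti : mul x y + mul y x = s *: one.
Hypothesis prod : mul (x + al *: one) (y + be *: one) = ga *: one.

Lemma mul_xyE : mul x y = lcomb (ga - al * be) (- be) (- al).
Proof.
apply: (addIr (be *: x + al *: y + (al * be) *: one)); rewrite !addrA.
move: prod; rewrite amulDl !amulDr !amulZl !amulZr !amul1l amul1r scalerA !addrA => ->.
by lcombE; congr lcomb; ring.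
Qed.

Lemma mul_yxE : mul y x = lcomb (s - ga + al * be) be al.
Proof.
have -> : mul y x = s *: one - mul x y by rewrite -anti [mul x y + _]addrC addrK.
by rewrite mul_xyE; lcombE; congr lcomb; ring.
Qed.

Let mul_lcombE := mul_lcomb (etrans xx (scalar_lcomb cu)) mul_xyE mul_yxE
  (etrans yy (scalar_lcomb cv)).

Lemma flexible_identities :
  [/\ s = 2 * (ga - al * be), be * cu + al * (ga - al * be) = 0
    & al * cv + be * (ga - al * be) = 0].
Proof.
have := flex (lcomb 0 1 0) (lcomb 0 0 1); rewrite !mul_lcombE => /lcomb_inj [e1 e2 _].
have := flex (lcomb 0 0 1) (lcomb 0 1 0); rewrite !mul_lcombE => /lcomb_inj [e3 _ _].
have sE : s = 2 * (ga - al * be).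
  apply/eqP; rewrite -subr_eq0; apply/eqP.
  by move/eqP: e2; rewrite -subr_eq0 => /eqP <-; ring.
split=> //; apply: double_eq0.
  by move/eqP: e1; rewrite -subr_eq0 => /eqP <-; rewrite sE; ring.
by move/eqP: e3; rewrite eq_sym -subr_eq0 => /eqP <-; rewrite sE; ring.
Qed.

Lemma norm_lcomb z0 z1 z2 :
  n (lcomb z0 z1 z2) = z0 ^+ 2 - (z1 ^+ 2 * cu + z2 ^+ 2 * cv + z1 * z2 * s).
Proof.
set q := _ + _ * s.
have sq : mul (lcomb 0 z1 z2) (lcomb 0 z1 z2) = q *: one.
  by rewrite mul_lcombE scalar_lcomb /q; congr lcomb; ring.
apply: (norm (u := lcomb 0 z1 z2) _ _ sq); last first.
  by rewrite scalar_lcomb lcombD; congr lcomb; ring.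
have [z12|] := boolP ((z1 != 0) || (z2 != 0)).
  by right; split; [exact: lcomb_nonscalar | exists q].
by rewrite negb_or !negbK => /andP [/eqP -> /eqP ->]; left; rewrite lcomb_zero.
Qed.

Lemma span_is_subalgebra : subalgebra mul one span.
Proof.
apply: span_subalgebra.
- by exists cu, 0, 0; rewrite xx scalar_lcomb.
- by exists (ga - al * be), (- be), (- al); rewrite mul_xyE.
- by exists (s - ga + al * be), be, al; rewrite mul_yxE.
- by exists cv, 0, 0; rewrite yy scalar_lcomb.
Qed.

Lemma shifts_eq0 : al = 0 /\ be = 0.
Proof.
have [sE rel_x rel_y] := flexible_identities.
have d0 : lcomb 0 be al = 0.
  apply: (nondegenerate_isotropic_radical (q := n) (V := span)).
  - by move=> k _ [z0 [z1 [z2 ->]]]; rewrite lcombZ !norm_lcomb; ring.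
  - by apply: nondeg; [exact: span_is_subalgebra | exact: span_dim3].
  - split; first by exists 0, be, al.
    move=> _ [z0 [z1 [z2 ->]]]; rewrite /polar lcombD !norm_lcomb sE.
    transitivity (-2 * (z1 * (be * cu + al * (ga - al * be))
                       + z2 * (al * cv + be * (ga - al * be)))); first ring.
    by rewrite rel_x rel_y !mulr0 addr0 mulr0.
  - rewrite norm_lcomb sE.
    transitivity (- (be * (be * cu + al * (ga - al * be))
                    + al * (al * cv + be * (ga - al * be)))); first ring.
    by rewrite rel_x rel_y !mulr0 addr0 oppr0.
by move: d0; rewrite lcomb_zero => /lcomb_inj [_ -> ->].
Qed.

Lemma mul_shifted_sym : mul (y + be *: one) (x + al *: one) = ga *: one.
Proof.
have [al0 be0] := shifts_eq0; have [sE _ _] := flexible_identities.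
rewrite al0 be0 !scale0r !addr0 mul_yxE sE al0 be0 scalar_lcomb.
by congr lcomb; ring.
Qed.

End ScalarProduct.
End Free.
End Span.

Lemma mul_scalar_sym a b ga : mul a b = ga *: one -> mul b a = ga *: one.
Proof.
have [fr|dep] := classic (free3 a b); last by rewrite (dependent_commute dep).
have [al [cu sq_a]] := recenter (free3_nonscalar fr).
have [be [cv sq_b]] := recenter (free3_nonscalar (free3C fr)).
have fr_shift := free3_shift (al := al) (be := be) fr.
have [s anti] := anticomm_scalar fr_shift sq_a sq_b.
have := mul_shifted_sym (al := al) (be := be) (ga := ga) fr_shift sq_a sq_b anti.
by rewrite !subrK.
Qed.

End QuadraticAlgebra.

Theorem proposition4p4 (F : fieldType) (A : lmodType F) (mul : A -> A -> A)
    (one : A) (n : A -> F) :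
  (2 : F) != 0 ->
  unital_algebra mul one ->
  flexible mul ->
  quadratic mul one ->
  is_norm mul one n ->
  (forall B : A -> Prop, subalgebra mul one B -> dim3 B -> nondegenerate_on n B) ->
  von_neumann_finite mul one /\ reversible mul.
Proof.
move=> two alg flex quad norm nondeg.
have sym := mul_scalar_sym alg quad two flex norm nondeg.
by split=> a b; [have := sym a b 1 | have := sym a b 0]; rewrite ?scale1r ?scale0r.
Qed.
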